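(* Let $k\ge1$ and $0<\alpha<\alpha_1<\alpha_2<\dots<\alpha_k<1$. For the asymmetric walk with fixed $q<p$, $$\lim_{N\to\infty}P_{[\alpha N]}\Big(\bigcap_{i=1}^k\{G([\alpha_iN])\equiv1\ (\mathrm{mod}\ 2)\}\Big)=\frac{1}{(2-(p-q))^k}.$$ Consequently, by inclusion–exclusion, the parities of $G([\alpha_1N]),\dots,G([\alpha_kN])$ converge jointly in distribution to i.i.d. Bernoulli random variables that equal ''odd'' with probability $(2-(p-q))^{-1}$.
   Context: Let $\mathcal T_N=\{0,\dots,N\}$ and let $(X_n)$ be a nearest-neighbour random walk on $\mathcal T_N$ stepping right with probability $p$ and left with probability $q=1-p$, where $0<q<p$ are fixed, independently at each step, and stopped the first time it is at $0$ or $N$. $P_x$ denotes the law with $X_0=x$. $T_a=\inf\{n\ge1:X_n=a\}$, $\tau_N=T_0\wedge T_N$, and $G(y)=\sum_{k=0}^{\tau_N}\mathbf 1\{X_k=y\}$ is the number of visits to $y$ before exit. $[\cdot]$ is the integer part. *)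

From Stdlib Require Import Reals ZArith List Bool.
Import ListNotations.
Open Scope R_scope.

(* A trajectory of the walk is given by its sequence of steps:
   true = step right (+1, prob. p), false = step left (-1, prob. q = 1-p). *)

Definition step (z : Z) (b : bool) : Z := if b then (z + 1)%Z else (z - 1)%Z.

Fixpoint positions (z : Z) (s : list bool) : list Z :=
  z :: match s with
       | nil => nil
       | b :: s' => positions (step z b) s'
       end.

Fixpoint all_paths (L : nat) : list (list bool) :=
  match L with
  | O => [@nil bool]
  | S L' => map (cons true) (all_paths L') ++ map (cons false) (all_paths L')
  end.

Definition weight (p : R) (s : list bool) : R :=
  fold_right (fun (b : bool) (acc : R) => ((if b then p else 1 - p) * acc)%R) 1%R s.

Definition interior (N : nat) (z : Z) : bool :=
  (0 <? z)%Z && (z <? Z.of_nat N)%Z.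

Definition boundary (N : nat) (z : Z) : bool :=
  (z =? 0)%Z || (z =? Z.of_nat N)%Z.

(* the walk started at x with steps s has tau_N = length s, i.e. X_1..X_{L-1}
   lie in (0,N) and X_L in {0,N}, with L >= 1 *)
Definition exits_at (N : nat) (x : Z) (s : list bool) : bool :=
  match tl (positions x s) with
  | nil => false
  | ps => forallb (interior N) (removelast ps) && boundary N (last ps 0%Z)
  end.

(* G(y) = number of k in {0,..,tau_N} with X_k = y *)
Definition visits (y : Z) (ps : list Z) : nat := count_occ Z.eq_dec ps y.

Definition all_odd (ys : list Z) (ps : list Z) : bool :=
  forallb (fun y => Nat.odd (visits y ps)) ys.

(* P_x( event and tau_N = L ) *)
Definition walk_mass (p : R) (N : nat) (x : Z) (ys : list Z) (L : nat) : R :=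
  fold_right Rplus 0
    (map (fun s => if exits_at N x s && all_odd ys (positions x s)
                   then weight p s else 0) (all_paths L)).

(* Write w_S = -1 on S and 1 elsewhere.  Multiplying out
   1{G(y) odd for all y in Y} = prod_(y in Y) (1 - (-1)^G(y)) / 2 gives
   P_x(all odd) = 2^-k sum_(S subset Y) (-1)^|S| u_S(x),  u_S(z) = E_z[prod_(n <= tau_N) w_S(X_n)].
   Each u_S is bounded by 1, equals 1 at N and solves u(z) = w_S(z) (p u(z+1) + q u(z-1)) in (0,N).
   Off S this makes the increments of u geometric with ratio q/p < 1, so u is almost constant
   on long stretches free of S; at an isolated site y of S the equation then forces
   u(y) ~ m u(y') for the next site y' of S (or N), with m = -(p-q)/(2-(p-q)).  When the sites
   are at mutual distance of order N, u_S(x) -> m^|S|, and the probability tends to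
   2^-k sum_S (-m)^|S| = ((1-m)/2)^k = (2-(p-q))^-k. *)

From Stdlib Require Import Reals ZArith List Bool Lia Lra.
Import ListNotations.
Open Scope R_scope.

Lemma Rabs_le_inv a b : Rabs a <= b -> - b <= a <= b.
Proof. intros H; pose proof (Rle_abs a); pose proof (Rle_abs (- a)); rewrite Rabs_Ropp in *; lra. Qed.

Definition sumR (l : list R) : R := fold_right Rplus 0 l.

Lemma sumR_app l1 l2 : sumR (l1 ++ l2) = sumR l1 + sumR l2.
Proof. induction l1 as [|a l1 IH]; simpl; [ring | rewrite IH; ring]. Qed.

Lemma sumR_map_ext {A} (f g : A -> R) l :
  (forall a, f a = g a) -> sumR (map f l) = sumR (map g l).
Proof. intros Hfg; induction l as [|a l IH]; simpl; [| rewrite Hfg, IH]; reflexivity. Qed.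

Lemma sumR_scal {A} c (f : A -> R) l :
  sumR (map (fun a => c * f a) l) = c * sumR (map f l).
Proof. induction l as [|a l IH]; simpl; [ring | rewrite IH; ring]. Qed.

Lemma sumR_plus {A} (f g : A -> R) l :
  sumR (map (fun a => f a + g a) l) = sumR (map f l) + sumR (map g l).
Proof. induction l as [|a l IH]; simpl; [ring | rewrite IH; ring]. Qed.

Lemma sumR_minus {A} (f g : A -> R) l :
  sumR (map (fun a => f a - g a) l) = sumR (map f l) - sumR (map g l).
Proof. induction l as [|a l IH]; simpl; [ring | rewrite IH; ring]. Qed.

Lemma sumR_zero {A} (l : list A) : sumR (map (fun _ => 0) l) = 0.
Proof. induction l as [|a l IH]; simpl; [| rewrite IH]; ring. Qed.

Lemma sumR_swap {A B} (f : A -> B -> R) la lb :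
  sumR (map (fun a => sumR (map (f a) lb)) la) =
  sumR (map (fun b => sumR (map (fun a => f a b) la)) lb).
Proof.
  induction la as [|a la IH]; simpl.
  - symmetry; apply sumR_zero.
  - rewrite IH, <- sumR_plus; reflexivity.
Qed.

Lemma sumR_le {A} (f g : A -> R) l :
  (forall a, In a l -> f a <= g a) -> sumR (map f l) <= sumR (map g l).
Proof.
  induction l as [|a l IH]; intros Hfg; simpl; [lra|].
  pose proof (Hfg a (or_introl eq_refl)).
  pose proof (IH (fun b Hb => Hfg b (or_intror Hb))). lra.
Qed.

Lemma sumR_nonneg {A} (f : A -> R) l :
  (forall a, In a l -> 0 <= f a) -> 0 <= sumR (map f l).
Proof. intros Hf; rewrite <- (sumR_zero l) at 1; now apply sumR_le. Qed.

Lemma sumR_abs {A} (f : A -> R) l :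
  Rabs (sumR (map f l)) <= sumR (map (fun a => Rabs (f a)) l).
Proof.
  induction l as [|a l IH]; simpl; [rewrite Rabs_R0; lra|].
  eapply Rle_trans; [apply Rabs_triang | lra].
Qed.

Lemma sumR_all_paths_S (f : list bool -> R) L :
  sumR (map f (all_paths (S L))) =
  sumR (map (fun s => f (true :: s)) (all_paths L)) +
  sumR (map (fun s => f (false :: s)) (all_paths L)).
Proof. simpl. rewrite map_app, sumR_app, !map_map. reflexivity. Qed.

Fixpoint sublists {A} (l : list A) : list (list A) :=
  match l with
  | [] => [[]]
  | y :: l' => sublists l' ++ map (cons y) (sublists l')
  end.

Lemma sumR_sublists_pow {A} c (l : list A) :
  sumR (map (fun S => c ^ length S) (sublists l)) = (1 + c) ^ length l.
Proof.
  induction l as [|y l IH]; simpl; [ring|].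
  rewrite map_app, sumR_app, map_map; simpl.
  rewrite sumR_scal, IH. ring.
Qed.

Lemma sublists_length_le {A} (l S : list A) :
  In S (sublists l) -> (length S <= length l)%nat.
Proof.
  revert S; induction l as [|y l IH]; simpl; intros S HS.
  - destruct HS as [<- | []]; simpl; lia.
  - apply in_app_or in HS as [HS | HS].
    + specialize (IH S HS); lia.
    + apply in_map_iff in HS as [S' [<- HS']]; simpl.
      specialize (IH S' HS'); lia.
Qed.

(** * Parity of the number of visits as a product of signs *)

Definition prod_along (w : Z -> R) (ps : list Z) : R :=
  fold_right (fun z acc => w z * acc) 1 ps.

Lemma prod_along_mul w1 w2 ps :
  prod_along (fun z => w1 z * w2 z) ps = prod_along w1 ps * prod_along w2 ps.
Proof. induction ps as [|a ps IH]; simpl; [ring | rewrite IH; ring]. Qed.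

Lemma prod_along_one ps : prod_along (fun _ => 1) ps = 1.
Proof. induction ps as [|a ps IH]; simpl; [| rewrite IH]; ring. Qed.

Lemma prod_along_abs_le1 w ps :
  (forall z, Rabs (w z) <= 1) -> Rabs (prod_along w ps) <= 1.
Proof.
  intros Hw; induction ps as [|a ps IH]; simpl; [rewrite Rabs_R1; lra|].
  rewrite Rabs_mult.
  pose proof (Hw a); pose proof (Rabs_pos (w a)); pose proof (Rabs_pos (prod_along w ps)).
  nra.
Qed.

Definition sign_flip (y z : Z) : R := if Z.eq_dec z y then -1 else 1.

Definition flips (S : list Z) (z : Z) : R :=
  fold_right (fun y acc => sign_flip y z * acc) 1 S.

Lemma prod_along_sign_flip y ps :
  prod_along (sign_flip y) ps = if Nat.odd (visits y ps) then -1 else 1.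
Proof.
  unfold visits; induction ps as [|a ps IH]; simpl; [reflexivity|].
  unfold sign_flip at 1; destruct (Z.eq_dec a y).
  - rewrite Nat.odd_succ, <- Nat.negb_odd, IH. destruct (Nat.odd _); simpl; ring.
  - rewrite IH; ring.
Qed.

Lemma prod_along_flips_cons y S ps :
  prod_along (flips (y :: S)) ps = prod_along (sign_flip y) ps * prod_along (flips S) ps.
Proof. rewrite <- prod_along_mul; reflexivity. Qed.

Lemma flips_abs_le1 S z : Rabs (flips S z) <= 1.
Proof.
  induction S as [|y S IH]; simpl; [rewrite Rabs_R1; lra|].
  fold (flips S z). rewrite Rabs_mult. unfold sign_flip.
  destruct (Z.eq_dec z y); [rewrite Rabs_left by lra | rewrite Rabs_R1]; lra.
Qed.

Lemma flips_notin S z : ~ In z S -> flips S z = 1.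
Proof.
  induction S as [|y S IH]; simpl; intros Hz; [reflexivity|].
  fold (flips S z). unfold sign_flip.
  destruct (Z.eq_dec z y); [exfalso; auto|]. rewrite IH by auto; ring.
Qed.

Lemma flips_in S z : NoDup S -> In z S -> flips S z = -1.
Proof.
  induction S as [|y S IH]; simpl; intros Hnd Hz; [destruct Hz|].
  fold (flips S z). inversion Hnd as [|? ? Hy Hnd']; subst. unfold sign_flip.
  destruct (Z.eq_dec z y) as [->|Hne].
  - rewrite flips_notin by auto; ring.
  - destruct Hz as [Hz|Hz]; [congruence|]. rewrite IH by auto; ring.
Qed.

(* [1{all odd} = prod_(y in ys) (1 - (-1)^G(y)) / 2] multiplied out; [(-1)^G(y)] is
   [prod_along (sign_flip y)]. *)
Lemma all_odd_expansion ys ps :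
  (if all_odd ys ps then 1 else 0) =
  / 2 ^ length ys *
  sumR (map (fun S => (-1) ^ length S * prod_along (flips S) ps) (sublists ys)).
Proof.
  induction ys as [|y ys IH]; simpl.
  - unfold flips; simpl. rewrite prod_along_one, Rinv_1; ring.
  - rewrite map_app, sumR_app, map_map.
    set (X := sumR _) at 1.
    rewrite (sumR_map_ext _
      (fun S => - prod_along (sign_flip y) ps * ((-1) ^ length S * prod_along (flips S) ps)))
      by (intros S; rewrite prod_along_flips_cons; simpl; ring).
    rewrite sumR_scal. fold X.
    assert (HX : X = 2 ^ length ys * (if all_odd ys ps then 1 else 0))
      by (rewrite IH; unfold X; field; apply pow_nonzero; lra).
    rewrite HX, prod_along_sign_flip.
    destruct (Nat.odd _), (all_odd ys ps); simpl; field; apply pow_nonzero; lra.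
Qed.

(** * First-step analysis of the exit functionals *)

(* Exit time counted from time 0 on: [stops_at N z s] iff the walk started at
   [z] with steps [s] satisfies [inf {n >= 0 | X_n \notin (0, N)} = length s]. *)
Definition stops_at (N : nat) (z : Z) (s : list bool) : bool :=
  match s with
  | [] => boundary N z
  | _ :: _ => interior N z && exits_at N z s
  end.

Lemma exits_at_cons N x b s : exits_at N x (b :: s) = stops_at N (step x b) s.
Proof.
  unfold exits_at; destruct s as [|b' s]; [reflexivity|].
  cbn [tl positions stops_at]. unfold exits_at. cbn [tl positions].
  destruct (positions (step (step x b) b') s) as [|z ps] eqn:E;
    [destruct s; discriminate|].
  cbn [removelast forallb last]. rewrite andb_assoc. reflexivity.
Qed.

Lemma interior_not_boundary N z : interior N z = true -> boundary N z = false.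
Proof.
  unfold interior, boundary; intros H.
  apply andb_prop in H as [H1 H2]; apply Z.ltb_lt in H1; apply Z.ltb_lt in H2.
  apply orb_false_iff; split; apply Z.eqb_neq; lia.
Qed.

Lemma exits_at_interior N x s : interior N x = true -> exits_at N x s = stops_at N x s.
Proof.
  intros Hx; destruct s as [|b s]; simpl.
  - now rewrite interior_not_boundary.
  - now rewrite Hx.
Qed.

(* [exit_functional p N w x L = E_x[prod_(n <= tau_N) w(X_n); tau_N = L]]. *)
Definition exit_functional (p : R) (N : nat) (w : Z -> R) (x : Z) (L : nat) : R :=
  sumR (map (fun s => if exits_at N x s then weight p s * prod_along w (positions x s) else 0)
            (all_paths L)).

Definition stop_functional (p : R) (N : nat) (w : Z -> R) (z : Z) (L : nat) : R :=
  sumR (map (fun s => if stops_at N z s then weight p s * prod_along w (positions z s) else 0)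
            (all_paths L)).

Lemma exit_functional_0 p N w x : exit_functional p N w x 0 = 0.
Proof. unfold exit_functional; simpl; unfold exits_at; simpl; ring. Qed.

Lemma exit_functional_S p N w x L :
  exit_functional p N w x (S L) =
  w x * (p * stop_functional p N w (x + 1) L + (1 - p) * stop_functional p N w (x - 1) L).
Proof.
  unfold exit_functional, stop_functional. rewrite sumR_all_paths_S.
  rewrite (sumR_map_ext (fun s => if exits_at N x (true :: s) then _ else _)
    (fun s => w x * p * (if stops_at N (x + 1) s
                         then weight p s * prod_along w (positions (x + 1) s) else 0)))
    by (intros s; rewrite exits_at_cons; simpl; destruct (stops_at _ _ _); ring).
  rewrite (sumR_map_ext (fun s => if exits_at N x (false :: s) then _ else _)
    (fun s => w x * (1 - p) * (if stops_at N (x - 1) s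
                               then weight p s * prod_along w (positions (x - 1) s) else 0)))
    by (intros s; rewrite exits_at_cons; simpl; destruct (stops_at _ _ _); ring).
  rewrite !sumR_scal; ring.
Qed.

Lemma stop_functional_0 p N w z :
  stop_functional p N w z 0 = if boundary N z then w z else 0.
Proof. unfold stop_functional; simpl; destruct (boundary N z); ring. Qed.

Lemma stop_functional_S p N w z L :
  stop_functional p N w z (S L) = if interior N z then exit_functional p N w z (S L) else 0.
Proof.
  unfold stop_functional, exit_functional. rewrite !sumR_all_paths_S; simpl.
  destruct (interior N z); simpl; [reflexivity|]. rewrite !sumR_zero; ring.
Qed.

Lemma stop_functional_interior p N w z L :
  interior N z = true -> stop_functional p N w z L = exit_functional p N w z L.
Proof.
  intros Hz; unfold stop_functional, exit_functional.
  apply sumR_map_ext; intros s. now rewrite exits_at_interior.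
Qed.

Lemma walk_mass_expansion p N x ys L :
  walk_mass p N x ys L =
  / 2 ^ length ys *
  sumR (map (fun S => (-1) ^ length S * exit_functional p N (flips S) x L) (sublists ys)).
Proof.
  unfold exit_functional.
  erewrite sumR_map_ext by (intros S; rewrite <- sumR_scal; reflexivity).
  rewrite sumR_swap, <- sumR_scal. apply sumR_map_ext; intros s.
  destruct (exits_at N x s); simpl.
  - rewrite (sumR_map_ext _
      (fun S => weight p s * ((-1) ^ length S * prod_along (flips S) (positions x s))))
      by (intros; ring).
    rewrite sumR_scal, Rmult_comm, Rmult_assoc, (Rmult_comm (sumR _)), <- all_odd_expansion.
    destruct (all_odd ys _); ring.
  - rewrite (sumR_map_ext _ (fun _ => 0)) by (intros; ring).
    rewrite sumR_zero; ring.
Qed.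

Lemma weight_nonneg p s : 0 <= p <= 1 -> 0 <= weight p s.
Proof.
  intros Hp; induction s as [|b s IH]; simpl; [lra|].
  destruct b; apply Rmult_le_pos; lra.
Qed.

Lemma stop_functional_abs_le p N w z L :
  0 <= p <= 1 -> (forall z, Rabs (w z) <= 1) ->
  Rabs (stop_functional p N w z L) <= stop_functional p N (fun _ => 1) z L.
Proof.
  intros Hp Hw; unfold stop_functional.
  eapply Rle_trans; [apply sumR_abs | apply sumR_le]; intros s _.
  destruct (stops_at N z s); [| rewrite Rabs_R0; lra].
  rewrite prod_along_one, Rabs_mult, Rabs_pos_eq by (apply weight_nonneg; auto).
  pose proof (prod_along_abs_le1 w (positions z s) Hw).
  pose proof (weight_nonneg p s Hp). nra.
Qed.

Lemma walk_mass_bounds p N x ys L :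
  0 <= p <= 1 -> 0 <= walk_mass p N x ys L <= exit_functional p N (fun _ => 1) x L.
Proof.
  intros Hp; unfold walk_mass, exit_functional; fold sumR; split.
  - apply sumR_nonneg; intros s _.
    destruct (_ && _); [apply weight_nonneg|]; lra.
  - apply sumR_le; intros s _. rewrite prod_along_one.
    pose proof (weight_nonneg p s Hp).
    destruct (exits_at N x s), (all_odd ys _); simpl; lra.
Qed.

Lemma sum_f_R0_zero n : sum_f_R0 (fun _ => 0) n = 0.
Proof. rewrite sum_cte; ring. Qed.

Lemma sum_f_R0_shift f n : sum_f_R0 f (S n) = f O + sum_f_R0 (fun i => f (S i)) n.
Proof. rewrite decomp_sum by lia; reflexivity. Qed.

Lemma sum_f_R0_scal c f n : sum_f_R0 (fun i => c * f i) n = c * sum_f_R0 f n.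
Proof. rewrite scal_sum; apply sum_eq; intros; ring. Qed.

Lemma sum_f_R0_sumR {A} (h : A -> nat -> R) l n :
  sum_f_R0 (fun L => sumR (map (fun a => h a L) l)) n = sumR (map (fun a => sum_f_R0 (h a) n) l).
Proof.
  induction l as [|a l IH]; simpl; [apply sum_f_R0_zero|].
  rewrite sum_plus, IH; reflexivity.
Qed.

Lemma Un_cv_const c : Un_cv (fun _ => c) c.
Proof. intros e He; exists O; intros. unfold R_dist; rewrite Rminus_diag, Rabs_R0; auto. Qed.

Lemma Un_cv_scal U l c : Un_cv U l -> Un_cv (fun n => c * U n) (c * l).
Proof. intros H; apply CV_mult; [apply Un_cv_const | exact H]. Qed.

Lemma Un_cv_sumR {A} (l : list A) (f : A -> nat -> R) (g : A -> R) :
  (forall a, In a l -> Un_cv (f a) (g a)) ->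
  Un_cv (fun n => sumR (map (fun a => f a n) l)) (sumR (map g l)).
Proof.
  induction l as [|a l IH]; intros H; simpl; [apply Un_cv_const|].
  apply CV_plus; [apply H; left | apply IH; intros; apply H; right]; auto.
Qed.

Lemma Un_cv_bounds U l a b : Un_cv U l -> (forall n, a <= U n <= b) -> a <= l <= b.
Proof.
  intros H Hb; split.
  - apply (@Rle_cv_lim (fun _ => a) U a l); [apply Hb | apply Un_cv_const | exact H].
  - apply (@Rle_cv_lim U (fun _ => b) l b); [apply Hb | exact H | apply Un_cv_const].
Qed.

Lemma Un_growing_partial_sums f : (forall n, 0 <= f n) -> Un_growing (sum_f_R0 f).
Proof. intros H n; rewrite tech5; specialize (H (S n)); lra. Qed.

Section Summability.

Variables (p : R) (N : nat).
Hypothesis p_range : 0 <= p <= 1.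

Lemma stop_functional_one_nonneg z L : 0 <= stop_functional p N (fun _ => 1) z L.
Proof.
  apply sumR_nonneg; intros s _; destruct (stops_at N z s); [| lra].
  rewrite prod_along_one, Rmult_1_r; apply weight_nonneg; auto.
Qed.

Lemma stop_mass_le1 n : forall z, sum_f_R0 (stop_functional p N (fun _ => 1) z) n <= 1.
Proof.
  induction n as [|n IH]; intros z; simpl.
  - rewrite stop_functional_0; destruct (boundary N z); lra.
  - rewrite <- tech5, sum_f_R0_shift, stop_functional_0.
    destruct (interior N z) eqn:Hz.
    + rewrite interior_not_boundary by auto.
      rewrite (sum_eq _ (fun i => p * stop_functional p N (fun _ => 1) (z + 1) i
                                  + (1 - p) * stop_functional p N (fun _ => 1) (z - 1) i))
        by (intros i _; rewrite stop_functional_S, Hz, exit_functional_S; ring).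
      rewrite sum_plus, !sum_f_R0_scal.
      specialize (IH (z + 1)%Z) as H1; specialize (IH (z - 1)%Z) as H2. nra.
    + rewrite (sum_eq _ (fun _ => 0)) by (intros i _; rewrite stop_functional_S, Hz; reflexivity).
      rewrite sum_f_R0_zero; destruct (boundary N z); lra.
Qed.

Lemma exit_mass_le1 x n : sum_f_R0 (exit_functional p N (fun _ => 1) x) n <= 1.
Proof.
  destruct n as [|n]; simpl; [rewrite exit_functional_0; lra|].
  rewrite <- tech5, sum_f_R0_shift, exit_functional_0.
  rewrite (sum_eq _ (fun i => p * stop_functional p N (fun _ => 1) (x + 1) i
                              + (1 - p) * stop_functional p N (fun _ => 1) (x - 1) i))
    by (intros i _; rewrite exit_functional_S; ring).
  rewrite sum_plus, !sum_f_R0_scal.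
  pose proof (stop_mass_le1 n (x + 1)%Z); pose proof (stop_mass_le1 n (x - 1)%Z). nra.
Qed.

Lemma walk_mass_summable x ys : {l | infinite_sum (walk_mass p N x ys) l}.
Proof.
  apply growing_cv.
  - apply Un_growing_partial_sums; intros; apply walk_mass_bounds; auto.
  - exists 1; intros r [n ->]. eapply Rle_trans; [| apply (exit_mass_le1 x n)].
    apply sum_Rle; intros; apply walk_mass_bounds; auto.
Qed.

Lemma stop_functional_summable w :
  (forall z, Rabs (w z) <= 1) -> forall z, {l | infinite_sum (stop_functional p N w z) l}.
Proof.
  intros Hw z.
  destruct (growing_cv (sum_f_R0 (stop_functional p N (fun _ => 1) z))) as [l1 H1].
  { apply Un_growing_partial_sums, stop_functional_one_nonneg. }
  { exists 1; intros r [n ->]; apply stop_mass_le1. }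
  destruct (Rseries_CV_comp (fun L => stop_functional p N (fun _ => 1) z L - stop_functional p N w z L)
                            (fun L => 2 * stop_functional p N (fun _ => 1) z L)) as [l2 H2].
  { intros n; pose proof (stop_functional_abs_le p N w z n p_range Hw) as Habs.
    apply Rabs_le_inv in Habs. lra. }
  { exists (2 * l1); eapply Un_cv_ext; [| apply Un_cv_scal, H1].
    intros n; symmetry; apply sum_f_R0_scal. }
  exists (l1 - l2); eapply Un_cv_ext; [| apply CV_minus; [exact H1 | exact H2]].
  intros n; simpl; rewrite minus_sum; ring.
Qed.

Section Limits.

Variables (w u : Z -> R).
Hypothesis u_sum : forall z, infinite_sum (stop_functional p N w z) (u z).

Lemma stop_limit_abs_le1 : (forall z, Rabs (w z) <= 1) -> forall z, Rabs (u z) <= 1.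
Proof.
  intros Hw z; apply Rabs_le, (Un_cv_bounds _ _ _ _ (u_sum z)); intros n.
  apply Rabs_le_inv. eapply Rle_trans; [apply Rsum_abs|].
  eapply Rle_trans; [| apply (stop_mass_le1 n z)].
  apply sum_Rle; intros; apply stop_functional_abs_le; auto.
Qed.

Lemma stop_limit_right_end : u (Z.of_nat N) = w (Z.of_nat N).
Proof.
  assert (HbN : boundary N (Z.of_nat N) = true)
    by (unfold boundary; rewrite Z.eqb_refl, orb_true_r; reflexivity).
  assert (HiN : interior N (Z.of_nat N) = false)
    by (unfold interior; apply andb_false_iff; right; apply Z.ltb_ge; lia).
  apply (UL_sequence _ _ _ (u_sum (Z.of_nat N))).
  eapply Un_cv_ext; [| apply Un_cv_const]; intros n; simpl.
  induction n as [|n IH]; simpl; [now rewrite stop_functional_0, HbN|].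
  rewrite <- IH, stop_functional_S, HiN; ring.
Qed.

Lemma stop_limit_step z :
  interior N z = true -> u z = w z * (p * u (z + 1)%Z + (1 - p) * u (z - 1)%Z).
Proof.
  intros Hz. apply (UL_sequence (fun n => sum_f_R0 (stop_functional p N w z) (S n))).
  - intros e He; destruct (u_sum z e He) as [M HM]; exists M; intros; apply HM; lia.
  - eapply Un_cv_ext; [| apply Un_cv_scal, CV_plus; apply Un_cv_scal; apply u_sum].
    intros n; cbv beta; symmetry.
    rewrite sum_f_R0_shift, stop_functional_0, interior_not_boundary by auto.
    rewrite (sum_eq _ (fun i => w z * (p * stop_functional p N w (z + 1) i
                                       + (1 - p) * stop_functional p N w (z - 1) i)))
      by (intros i _; rewrite stop_functional_S, Hz, exit_functional_S; reflexivity).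
    rewrite sum_f_R0_scal, sum_plus, !sum_f_R0_scal; ring.
Qed.

End Limits.
End Summability.

(** * Exit functionals across well-separated flipped sites *)

Fixpoint gapped (G : nat) (NZ a : Z) (s : list Z) : Prop :=
  match s with
  | [] => (a + Z.of_nat G <= NZ)%Z
  | y :: s' => (a + Z.of_nat G <= y)%Z /\ gapped G NZ y s'
  end.

Lemma gapped_end G NZ a s : gapped G NZ a s -> (a + Z.of_nat G <= NZ)%Z.
Proof.
  revert a; induction s as [|y s IH]; simpl; intros a; [lia|].
  intros [Hy Hs]; specialize (IH y Hs); lia.
Qed.

Lemma gapped_In G NZ a s z :
  gapped G NZ a s -> In z s -> (a + Z.of_nat G <= z /\ z + Z.of_nat G <= NZ)%Z.
Proof.
  revert a; induction s as [|y s IH]; simpl; intros a Hs Hz; [destruct Hz|].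
  destruct Hs as [Hy Hs]. destruct Hz as [<- | Hz].
  - split; [exact Hy | exact (gapped_end G NZ y s Hs)].
  - specialize (IH y Hs Hz); lia.
Qed.

Lemma gapped_hd G NZ a s :
  gapped G NZ a s -> (a + Z.of_nat G <= hd NZ s)%Z /\ (hd NZ s <= NZ)%Z.
Proof.
  destruct s as [|y s]; simpl; intros Hs; [lia|].
  pose proof (gapped_In G NZ a (y :: s) y Hs (or_introl eq_refl)); lia.
Qed.

Lemma gapped_hd_le G NZ a s z : gapped G NZ a s -> In z s -> (hd NZ s <= z)%Z.
Proof.
  destruct s as [|y s]; simpl; intros Hs Hz; [destruct Hz|].
  destruct Hz as [<- | Hz]; [lia|].
  pose proof (gapped_In G NZ y s z (proj2 Hs) Hz); lia.
Qed.

Lemma gapped_weaken G NZ a a' s : (a' <= a)%Z -> gapped G NZ a s -> gapped G NZ a' s.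
Proof. destruct s; simpl; intros; [lia|]. split; [lia | tauto]. Qed.

Lemma gapped_sublist G NZ a ys S : In S (sublists ys) -> gapped G NZ a ys -> gapped G NZ a S.
Proof.
  revert a S; induction ys as [|y ys IH]; simpl; intros a S HS Hys.
  - destruct HS as [<- | []]; exact Hys.
  - destruct Hys as [Hy Hys]. apply in_app_or in HS as [HS | HS].
    + apply (gapped_weaken G NZ y); [lia | exact (IH y S HS Hys)].
    + apply in_map_iff in HS as [S' [<- HS']]; split; [exact Hy | exact (IH y S' HS' Hys)].
Qed.

Lemma gapped_NoDup G NZ a s : (1 <= G)%nat -> gapped G NZ a s -> NoDup s.
Proof.
  intros HG; revert a; induction s as [|y s IH]; simpl; intros a Hs; constructor.
  - intros Hy; pose proof (gapped_In G NZ y s y (proj2 Hs) Hy); lia.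
  - exact (IH y (proj2 Hs)).
Qed.

Lemma pow_le_pow_decr x m n : 0 <= x <= 1 -> (m <= n)%nat -> x ^ n <= x ^ m.
Proof.
  intros Hx Hmn; replace n with (m + (n - m))%nat by lia; rewrite pow_add.
  pose proof (pow_le x m (proj1 Hx)); pose proof (pow_le x (n - m) (proj1 Hx)).
  assert (x ^ (n - m) <= 1) by (rewrite <- (pow1 (n - m)); apply pow_incr; lra).
  nra.
Qed.

Definition qp_ratio (p : R) : R := (1 - p) / p.

(* Across a flipped site [y] isolated by long unflipped stretches on both sides,
   [u y] is approximately [site_factor p * u (y + g)]: see [site_factor_transfer]. *)
Definition site_factor (p : R) : R := - (p - (1 - p)) / (2 - (p - (1 - p))).

Lemma qp_ratio_range p : 1 - p < p -> p < 1 -> 0 < qp_ratio p < 1.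
Proof.
  intros Hp1 Hp2; unfold qp_ratio; split; [apply Rdiv_lt_0_compat; lra|].
  apply (Rmult_lt_reg_r p); [lra|]. unfold Rdiv; rewrite Rmult_assoc, Rinv_l by lra; lra.
Qed.

Lemma inv_one_minus_qp_ratio p : 1 - p < p -> / (1 - qp_ratio p) = p / (p - (1 - p)).
Proof. intros Hp; unfold qp_ratio; field; lra. Qed.

Lemma site_factor_abs_le1 p : 1 - p < p -> p < 1 -> Rabs (site_factor p) <= 1.
Proof.
  intros Hp1 Hp2; unfold site_factor; apply Rabs_le.
  replace (- (p - (1 - p)) / (2 - (p - (1 - p)))) with (1 - 2 / (3 - 2 * p)) by (field; lra).
  assert (1 <= 2 / (3 - 2 * p) <= 2).
  { split; apply (Rmult_le_reg_r (3 - 2 * p)); try lra;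
      unfold Rdiv; rewrite Rmult_assoc, Rinv_l by lra; lra. }
  lra.
Qed.

Lemma site_factor_transfer p uy dy dl v t : 1 - p < p -> p < 1 ->
  v = uy + dy * (1 - t) / (1 - qp_ratio p) ->
  2 * uy = - p * dy + (1 - p) * dl ->
  uy - site_factor p * v =
  - site_factor p * (2 * t * uy + (1 - p) * (1 - t) * dl) / (p - (1 - p)).
Proof.
  intros Hp1 Hp2 Hv Hy.
  assert (Hdy : dy = ((1 - p) * dl - 2 * uy) / p)
    by (apply (Rmult_eq_reg_l p); [rewrite Hy; field |]; lra).
  subst v dy; unfold site_factor, qp_ratio; field; lra.
Qed.

Lemma site_factor_transfer_error p uy dl t e : 1 - p < p -> p < 1 ->
  0 <= t <= 1 -> t <= e -> Rabs uy <= 1 -> Rabs dl <= 2 * e ->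
  Rabs (- site_factor p * (2 * t * uy + (1 - p) * (1 - t) * dl) / (p - (1 - p))) <=
  4 * e / (p - (1 - p)).
Proof.
  intros Hp1 Hp2 Ht Hte Huy Hdl.
  apply Rabs_le_inv in Huy; apply Rabs_le_inv in Hdl.
  assert (HX : Rabs (2 * t * uy + (1 - p) * (1 - t) * dl) <= 4 * e).
  { set (c := (1 - p) * (1 - t)).
    assert (Hc : 0 <= c <= 1) by (unfold c; split; nra).
    assert (0 <= t * (1 + uy)) by (apply Rmult_le_pos; lra).
    assert (0 <= t * (1 - uy)) by (apply Rmult_le_pos; lra).
    assert (0 <= c * (2 * e + dl)) by (apply Rmult_le_pos; lra).
    assert (0 <= c * (2 * e - dl)) by (apply Rmult_le_pos; lra).
    assert (0 <= (1 - c) * e) by (apply Rmult_le_pos; lra).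
    apply Rabs_le; split; nra. }
  unfold Rdiv; rewrite Rabs_mult, Rabs_mult, Rabs_Ropp, Rabs_inv, (Rabs_pos_eq (p - _)) by lra.
  pose proof (site_factor_abs_le1 p Hp1 Hp2); pose proof (Rabs_pos (site_factor p)).
  pose proof (Rabs_pos (2 * t * uy + (1 - p) * (1 - t) * dl)).
  apply Rmult_le_compat_r; [apply Rlt_le, Rinv_0_lt_compat; lra | nra].
Qed.

Section Flipped_sites.

Variable p : R.
Hypotheses (p_gt_half : 1 - p < p) (p_lt1 : p < 1).
Variables (NZ : Z) (w u : Z -> R).
Hypothesis u_step :
  forall z, (0 < z < NZ)%Z -> u z = w z * (p * u (z + 1)%Z + (1 - p) * u (z - 1)%Z).
Hypothesis u_abs_le1 : forall z, (0 <= z <= NZ)%Z -> Rabs (u z) <= 1.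

Let r := qp_ratio p.
Let incr z := u (z + 1)%Z - u z.

Definition unflipped z := (0 < z < NZ)%Z /\ w z = 1.

Lemma incr_unflipped z : unflipped z -> incr z = r * incr (z - 1)%Z.
Proof.
  intros [Hz Hw]; pose proof (u_step z Hz) as E; rewrite Hw in E.
  unfold incr, r, qp_ratio; replace (z - 1 + 1)%Z with z by lia.
  apply (Rmult_eq_reg_l p); [| lra]; field_simplify; lra.
Qed.

Lemma incr_run a n :
  (forall j, (1 <= j <= n)%nat -> unflipped (a + Z.of_nat j)%Z) ->
  incr (a + Z.of_nat n)%Z = r ^ n * incr a.
Proof.
  induction n as [|n IH]; intros Hun; [simpl; rewrite Z.add_0_r; ring|].
  rewrite incr_unflipped by (apply Hun; lia).
  replace (a + Z.of_nat (S n) - 1)%Z with (a + Z.of_nat n)%Z by lia.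
  rewrite IH by (intros; apply Hun; lia); simpl; ring.
Qed.

Lemma u_run a n :
  (forall j, (1 <= j < n)%nat -> unflipped (a + Z.of_nat j)%Z) ->
  u (a + Z.of_nat n)%Z = u a + incr a * (1 - r ^ n) / (1 - r).
Proof.
  pose proof (qp_ratio_range p p_gt_half p_lt1) as Hr; fold r in Hr.
  induction n as [|n IH]; intros Hun.
  - rewrite Z.add_0_r; simpl; field; lra.
  - replace (a + Z.of_nat (S n))%Z with (a + Z.of_nat n + 1)%Z by lia.
    replace (u (a + Z.of_nat n + 1)%Z) with (u (a + Z.of_nat n)%Z + incr (a + Z.of_nat n)%Z)
      by (unfold incr; ring).
    rewrite incr_run, IH by (intros; apply Hun; lia); simpl; field; lra.
Qed.

Lemma incr_abs_le2 z : (0 <= z)%Z -> (z + 1 <= NZ)%Z -> Rabs (incr z) <= 2.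
Proof.
  intros Hz1 Hz2; unfold incr.
  pose proof (u_abs_le1 z ltac:(lia)); pose proof (u_abs_le1 (z + 1)%Z ltac:(lia)).
  unfold Rminus; eapply Rle_trans; [apply Rabs_triang|]; rewrite Rabs_Ropp; lra.
Qed.

Lemma flipped_site_balance y :
  (0 < y < NZ)%Z -> w y = -1 -> 2 * u y = - p * incr y + (1 - p) * incr (y - 1)%Z.
Proof.
  intros Hy Hw; pose proof (u_step y Hy) as E; rewrite Hw in E.
  unfold incr; replace (y - 1 + 1)%Z with y by lia; lra.
Qed.

Lemma flipped_site_transfer (a y b : Z) (G : nat) :
  (1 <= G)%nat -> (0 <= a)%Z -> (a + Z.of_nat G <= y)%Z -> (y + Z.of_nat G <= b <= NZ)%Z ->
  w y = -1 ->
  (forall z, (a < z < y)%Z -> unflipped z) -> (forall z, (y < z < b)%Z -> unflipped z) ->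
  Rabs (u y - site_factor p * u b) <= 4 * r ^ (G - 1) / (p - (1 - p)).
Proof.
  intros HG Ha Hay Hyb Hwy Hleft Hright.
  pose proof (qp_ratio_range p p_gt_half p_lt1) as Hr; fold r in Hr.
  set (gL := Z.to_nat (y - a)); set (gR := Z.to_nat (b - y)).
  assert (Hdl : incr (y - 1)%Z = r ^ (gL - 1) * incr a).
  { replace (y - 1)%Z with (a + Z.of_nat (gL - 1))%Z by lia.
    apply incr_run; intros j Hj; apply Hleft; lia. }
  assert (Hv : u b = u y + incr y * (1 - r ^ gR) / (1 - r)).
  { replace b with (y + Z.of_nat gR)%Z at 1 by lia.
    apply u_run; intros j Hj; apply Hright; lia. }
  rewrite (site_factor_transfer p (u y) (incr y) (incr (y - 1)%Z) (u b) (r ^ gR))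
    by auto using flipped_site_balance with zarith.
  pose proof (pow_le r gR ltac:(lra)).
  apply site_factor_transfer_error; auto.
  - split; [lra | apply (pow_le_pow_decr r 0); lra || lia].
  - apply pow_le_pow_decr; lra || lia.
  - apply u_abs_le1; lia.
  - rewrite Hdl, Rabs_mult, Rabs_pos_eq by (apply pow_le; lra).
    pose proof (incr_abs_le2 a Ha ltac:(lia)); pose proof (Rabs_pos (incr a)).
    assert (r ^ (gL - 1) <= r ^ (G - 1)) by (apply pow_le_pow_decr; lra || lia).
    pose proof (pow_le r (gL - 1) ltac:(lra)). nra.
Qed.

Lemma gapped_flips_product G s a :
  (1 <= G)%nat -> u NZ = 1 -> (0 <= a)%Z -> gapped G NZ a s ->
  (forall z, (a < z < NZ)%Z -> ~ In z s -> w z = 1) -> (forall z, In z s -> w z = -1) ->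
  Rabs (u (hd NZ s) - site_factor p ^ length s) <=
  INR (length s) * (4 * r ^ (G - 1) / (p - (1 - p))).
Proof.
  intros HG Hend; revert a; induction s as [|y s IH]; intros a Ha Hs Hun Hfl.
  - simpl; rewrite Hend, Rminus_diag, Rabs_R0; lra.
  - destruct Hs as [Hay Hs].
    change (hd NZ (y :: s)) with y; change (length (y :: s)) with (S (length s)).
    pose proof (gapped_hd G NZ y s Hs) as Hhd.
    assert (Htail : Rabs (u (hd NZ s) - site_factor p ^ length s) <=
                    INR (length s) * (4 * r ^ (G - 1) / (p - (1 - p)))).
    { apply (IH y); [lia | exact Hs | | intros z Hz; apply Hfl; right; exact Hz].
      intros z Hz Hzs; apply Hun; [lia|]; intros [E | Hin]; [lia | tauto]. }
    assert (Hsite : Rabs (u y - site_factor p * u (hd NZ s)) <= 4 * r ^ (G - 1) / (p - (1 - p))).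
    { apply (flipped_site_transfer a y (hd NZ s) G); [lia | lia | lia | lia | apply Hfl; left; reflexivity | |].
      - intros z Hz; split; [lia|]; apply Hun; [lia|].
        intros [E | Hin]; [lia|]; pose proof (gapped_In G NZ y s z Hs Hin); lia.
      - intros z Hz; split; [lia|]; apply Hun; [lia|].
        intros [E | Hin]; [lia|]; pose proof (gapped_hd_le G NZ y s z Hs Hin); lia. }
    replace (u y - site_factor p ^ S (length s))
      with ((u y - site_factor p * u (hd NZ s))
            + site_factor p * (u (hd NZ s) - site_factor p ^ length s)) by (simpl; ring).
    eapply Rle_trans; [apply Rabs_triang|]; rewrite Rabs_mult, S_INR.
    pose proof (site_factor_abs_le1 p p_gt_half p_lt1).
    pose proof (Rabs_pos (site_factor p)); pose proof (Rabs_pos (u (hd NZ s) - site_factor p ^ length s)).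
    nra.
Qed.

Lemma unflipped_prefix (x : nat) (y : Z) :
  (1 <= x)%nat -> (Z.of_nat x <= y <= NZ)%Z -> (forall z, (0 < z < y)%Z -> unflipped z) ->
  Rabs (u (Z.of_nat x) - u y) <= 2 * r ^ x / (p - (1 - p)).
Proof.
  intros Hx Hxy Hun. pose proof (qp_ratio_range p p_gt_half p_lt1) as Hr; fold r in Hr.
  set (n := Z.to_nat y).
  assert (Hux : u (Z.of_nat x) = u 0%Z + incr 0%Z * (1 - r ^ x) / (1 - r))
    by (apply (u_run 0 x); intros; apply Hun; lia).
  assert (Huy : u y = u 0%Z + incr 0%Z * (1 - r ^ n) / (1 - r)).
  { replace y with (0 + Z.of_nat n)%Z at 1 by lia. apply u_run; intros; apply Hun; lia. }
  rewrite Hux, Huy.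
  replace (u 0%Z + incr 0%Z * (1 - r ^ x) / (1 - r) - (u 0%Z + incr 0%Z * (1 - r ^ n) / (1 - r)))
    with (incr 0%Z * (r ^ n - r ^ x) * / (1 - r)) by (field; lra).
  unfold r; rewrite inv_one_minus_qp_ratio by auto; fold r.
  assert (r ^ n <= r ^ x) by (apply pow_le_pow_decr; lra || lia).
  assert (HdD : Rabs (incr 0%Z * (r ^ n - r ^ x)) <= 2 * r ^ x).
  { pose proof (incr_abs_le2 0 ltac:(lia) ltac:(lia)); pose proof (pow_le r n ltac:(lra)).
    rewrite Rabs_mult, Rabs_minus_sym, (Rabs_pos_eq (_ - _)) by lra.
    pose proof (Rabs_pos (incr 0%Z)). nra. }
  assert (Hpq : 0 < p / (p - (1 - p)) <= / (p - (1 - p))).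
  { split; [apply Rdiv_lt_0_compat; lra|]. unfold Rdiv.
    rewrite <- (Rmult_1_l (/ (p - _))) at 2.
    apply Rmult_le_compat_r; [apply Rlt_le, Rinv_0_lt_compat |]; lra. }
  rewrite Rabs_mult, (Rabs_pos_eq (p / _)) by lra.
  pose proof (pow_le r x ltac:(lra)); pose proof (Rabs_pos (incr 0%Z * (r ^ n - r ^ x))).
  unfold Rdiv at 2; apply Rmult_le_compat; lra.
Qed.

End Flipped_sites.

Lemma stop_limit_near_power p N G (x : Z) S (u : Z -> R) :
  1 - p < p -> p < 1 -> (1 <= G)%nat -> (Z.of_nat G <= x)%Z -> gapped G (Z.of_nat N) x S ->
  (forall z, infinite_sum (stop_functional p N (flips S) z) (u z)) ->
  Rabs (u x - site_factor p ^ length S) <=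
  (2 + 4 * INR (length S)) / (p - (1 - p)) * qp_ratio p ^ (G - 1).
Proof.
  intros Hp1 Hp2 HG Hx Hs Hu.
  set (NZ := Z.of_nat N) in *; set (r := qp_ratio p).
  pose proof (qp_ratio_range p Hp1 Hp2) as Hr; fold r in Hr.
  assert (Hstep : forall z, (0 < z < NZ)%Z ->
            u z = flips S z * (p * u (z + 1)%Z + (1 - p) * u (z - 1)%Z)).
  { intros z Hz; apply (stop_limit_step p N (flips S) u Hu).
    unfold interior; apply andb_true_iff; split; apply Z.ltb_lt; lia. }
  assert (Hbound : forall z, (0 <= z <= NZ)%Z -> Rabs (u z) <= 1)
    by (intros z _; apply (stop_limit_abs_le1 p N ltac:(lra) (flips S) u Hu (flips_abs_le1 S))).
  assert (Hend : u NZ = 1).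
  { unfold NZ; rewrite (stop_limit_right_end p N (flips S) u Hu); apply flips_notin.
    intros Hin; pose proof (gapped_In G NZ x S NZ Hs Hin); lia. }
  pose proof (gapped_hd G NZ x S Hs) as Hhd.
  assert (Hprod := gapped_flips_product p Hp1 Hp2 NZ (flips S) u Hstep Hbound G S 0 HG Hend
    ltac:(lia) (gapped_weaken G NZ x 0 S ltac:(lia) Hs)
    (fun z _ Hz => flips_notin S z Hz)
    (fun z Hz => flips_in S z (gapped_NoDup G NZ x S HG Hs) Hz)).
  assert (Hpre : Rabs (u x - u (hd NZ S)) <= 2 * r ^ Z.to_nat x / (p - (1 - p))).
  { rewrite <- (Z2Nat.id x) at 1 by lia.
    apply (unflipped_prefix p Hp1 Hp2 NZ (flips S) u Hstep Hbound); [lia | lia |].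
    intros z Hz; split; [lia|]; apply flips_notin; intros Hin.
    pose proof (gapped_hd_le G NZ x S z Hs Hin); lia. }
  assert (r ^ Z.to_nat x <= r ^ (G - 1)) by (apply pow_le_pow_decr; lra || lia).
  replace (u x - site_factor p ^ length S)
    with ((u x - u (hd NZ S)) + (u (hd NZ S) - site_factor p ^ length S)) by ring.
  eapply Rle_trans; [apply Rabs_triang|].
  replace ((2 + 4 * INR (length S)) / (p - (1 - p)) * r ^ (G - 1))
    with (2 * r ^ (G - 1) / (p - (1 - p)) + INR (length S) * (4 * r ^ (G - 1) / (p - (1 - p))))
    by (field; lra).
  apply Rplus_le_compat; [| exact Hprod].
  eapply Rle_trans; [exact Hpre|]. unfold Rdiv.
  apply Rmult_le_compat_r; [apply Rlt_le, Rinv_0_lt_compat |]; lra.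
Qed.

Lemma walk_mass_sum_expansion p N x ys (v : list Z -> R) :
  interior N x = true ->
  (forall S, infinite_sum (stop_functional p N (flips S) x) (v S)) ->
  infinite_sum (walk_mass p N x ys)
    (/ 2 ^ length ys * sumR (map (fun S => (-1) ^ length S * v S) (sublists ys))).
Proof.
  intros Hx Hv.
  apply (Un_cv_ext (fun n => / 2 ^ length ys *
           sumR (map (fun S => (-1) ^ length S * sum_f_R0 (stop_functional p N (flips S) x) n)
                     (sublists ys)))).
  - intros n. rewrite (sum_eq _ _ n (fun L _ => walk_mass_expansion p N x ys L)).
    rewrite sum_f_R0_scal, (sum_f_R0_sumR (fun S L => (-1) ^ length S * _)).
    f_equal; apply sumR_map_ext; intros S.
    rewrite sum_f_R0_scal; f_equal; apply sum_eq; intros L _.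
    apply stop_functional_interior, Hx.
  - apply Un_cv_scal, Un_cv_sumR; intros S _; apply Un_cv_scal, Hv.
Qed.

Lemma half_one_minus_site_factor p : 1 - p < p -> p < 1 ->
  (1 - site_factor p) / 2 = / (2 - (p - (1 - p))).
Proof. intros; unfold site_factor; field; lra. Qed.

Lemma sublists_site_factor_expansion p (ys : list Z) : 1 - p < p -> p < 1 ->
  / (2 - (p - (1 - p))) ^ length ys =
  / 2 ^ length ys * sumR (map (fun S => (-1) ^ length S * site_factor p ^ length S) (sublists ys)).
Proof.
  intros Hp1 Hp2.
  rewrite (sumR_map_ext _ (fun S => (- site_factor p) ^ length S))
    by (intros S; rewrite <- Rpow_mult_distr; f_equal; ring).
  rewrite sumR_sublists_pow, <- pow_inv, <- half_one_minus_site_factor by auto.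
  unfold Rdiv; rewrite Rpow_mult_distr, pow_inv.
  replace (1 + - site_factor p) with (1 - site_factor p) by ring. ring.
Qed.

Lemma odd_probability_error p N G x ys l :
  1 - p < p -> p < 1 -> (1 <= G)%nat -> (Z.of_nat G <= x)%Z -> gapped G (Z.of_nat N) x ys ->
  infinite_sum (walk_mass p N x ys) l ->
  Rabs (l - / (2 - (p - (1 - p))) ^ length ys) <=
  (2 + 4 * INR (length ys)) / (p - (1 - p)) * qp_ratio p ^ (G - 1).
Proof.
  intros Hp1 Hp2 HG Hx Hys Hl.
  assert (Hp : 0 <= p <= 1) by lra.
  assert (Hint : interior N x = true).
  { pose proof (gapped_end G _ x ys Hys).
    unfold interior; apply andb_true_iff; split; apply Z.ltb_lt; lia. }
  set (u S z := proj1_sig (stop_functional_summable p N Hp (flips S) (flips_abs_le1 S) z)).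
  assert (Hu : forall S z, infinite_sum (stop_functional p N (flips S) z) (u S z))
    by (intros S z; exact (proj2_sig (stop_functional_summable p N Hp (flips S) (flips_abs_le1 S) z))).
  rewrite (uniqueness_sum _ _ _ Hl (walk_mass_sum_expansion p N x ys (fun S => u S x) Hint (fun S => Hu S x))).
  rewrite sublists_site_factor_expansion, <- Rmult_minus_distr_l, <- sumR_minus by auto.
  set (B := (2 + 4 * INR (length ys)) / (p - (1 - p)) * qp_ratio p ^ (G - 1)).
  rewrite Rabs_mult, Rabs_pos_eq by (apply Rlt_le, Rinv_0_lt_compat, pow_lt; lra).
  eapply Rle_trans.
  { apply Rmult_le_compat_l; [apply Rlt_le, Rinv_0_lt_compat, pow_lt; lra|].
    eapply Rle_trans; [apply sumR_abs|].
    apply (sumR_le _ (fun S => B * 1 ^ length S)); intros S HS.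
    rewrite <- Rmult_minus_distr_l, Rabs_mult, pow1, Rmult_1_r, pow_1_abs, Rmult_1_l.
    eapply Rle_trans; [apply (stop_limit_near_power p N G x S); auto; eapply gapped_sublist; eauto|].
    pose proof (qp_ratio_range p Hp1 Hp2).
    pose proof (le_INR _ _ (sublists_length_le ys S HS)).
    unfold B; apply Rmult_le_compat_r; [apply pow_le; lra|].
    unfold Rdiv; apply Rmult_le_compat_r; [apply Rlt_le, Rinv_0_lt_compat |]; lra. }
  rewrite sumR_scal, sumR_sublists_pow.
  replace (1 + 1) with 2 by ring. right; field; apply pow_nonzero; lra.
Qed.

(** * Sites at macroscopic distance are eventually well separated *)

Lemma Int_part_gap a b (G : nat) : INR G <= b - a -> (Int_part a + Z.of_nat G <= Int_part b)%Z.
Proof.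
  intros Hab; destruct (base_Int_part a) as [Ha _]; destruct (base_Int_part b) as [_ Hb].
  assert (IZR (Int_part b - Int_part a - Z.of_nat G + 1) > 0).
  { rewrite plus_IZR, !minus_IZR, <- INR_IZR_INZ; lra. }
  apply lt_0_IZR in H; lia.
Qed.

Lemma scaled_Int_part_gap a b G : a < b ->
  exists N0, forall N, (N0 <= N)%nat -> (Int_part (a * INR N) + Z.of_nat G <= Int_part (b * INR N))%Z.
Proof.
  intros Hab; destruct (archimed (INR G / (b - a))) as [Hup _].
  exists (Z.to_nat (up (INR G / (b - a)))); intros N HN; apply Int_part_gap.
  assert (HNG : INR G / (b - a) <= INR N).
  { apply le_INR in HN. destruct (Z_le_gt_dec 0 (up (INR G / (b - a)))) as [H0 | H0].
    - rewrite INR_IZR_INZ, Z2Nat.id in HN by exact H0; lra.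
    - apply Z.gt_lt, IZR_lt in H0. pose proof (pos_INR N); lra. }
  apply (Rmult_le_compat_l (b - a)) in HNG; [| lra].
  replace ((b - a) * (INR G / (b - a))) with (INR G) in HNG by (field; lra). lra.
Qed.

Lemma scaled_Int_part_gaps (beta : nat -> R) m :
  (forall i, (i < m)%nat -> beta i < beta (S i)) -> forall G : nat,
  exists N0, forall N, (N0 <= N)%nat -> forall i, (i < m)%nat ->
    (Int_part (beta i * INR N) + Z.of_nat G <= Int_part (beta (S i) * INR N))%Z.
Proof.
  intros Hbeta G; induction m as [|m IH].
  - exists O; intros; lia.
  - destruct IH as [N1 HN1]; [intros; apply Hbeta; lia|].
    destruct (scaled_Int_part_gap (beta m) (beta (S m)) G (Hbeta m ltac:(lia))) as [N2 HN2].
    exists (Nat.max N1 N2); intros N HN i Hi.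
    destruct (Nat.eq_dec i m) as [-> | Him]; [apply HN2 | apply HN1]; lia.
Qed.

Lemma gapped_of_steps G NZ (b : nat -> Z) m : forall j,
  (forall i, (j <= i < j + m)%nat -> (b i + Z.of_nat G <= b (S i))%Z) ->
  (b (j + m)%nat + Z.of_nat G <= NZ)%Z ->
  gapped G NZ (b j) (map b (seq (S j) m)).
Proof.
  induction m as [|m IH]; intros j Hsteps Hend; simpl.
  - rewrite Nat.add_0_r in Hend; exact Hend.
  - split; [apply Hsteps; lia|].
    apply IH; [intros; apply Hsteps; lia |]. now rewrite Nat.add_succ_comm.

Qed.

Lemma scaled_sites_gapped (k : nat) (alpha : R) (alphas : nat -> R) :
  (1 <= k)%nat -> 0 < alpha -> alpha < alphas 0%nat ->
  (forall i : nat, (S i < k)%nat -> alphas i < alphas (S i)) ->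
  alphas (k - 1)%nat < 1 ->
  forall G : nat, exists N0, forall N, (N0 <= N)%nat ->
    (Z.of_nat G <= Int_part (alpha * INR N))%Z /\
    gapped G (Z.of_nat N) (Int_part (alpha * INR N))
      (map (fun i => Int_part (alphas i * INR N)) (seq 0 k)).
Proof.
  intros Hk Ha Ha0 Hinc Hlast G.
  set (beta i := match i with O => alpha | S i => alphas i end).
  destruct (scaled_Int_part_gaps beta k) with (G := G) as [N1 HN1].
  { intros [|i] Hi; simpl; [exact Ha0 | apply Hinc; exact Hi]. }
  destruct (scaled_Int_part_gap 0 alpha G Ha) as [N2 HN2].
  destruct (scaled_Int_part_gap (alphas (k - 1)%nat) 1 G Hlast) as [N3 HN3].
  exists (Nat.max N1 (Nat.max N2 N3)); intros N HN; split.
  - specialize (HN2 N ltac:(lia)).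
    replace (Int_part (0 * INR N)) with 0%Z in HN2 by (apply Int_part_spec; lra). lia.
  - replace (map _ (seq 0 k)) with (map (fun i => Int_part (beta i * INR N)) (seq 1 k))
      by (rewrite <- seq_shift, map_map; reflexivity).
    apply (gapped_of_steps G _ (fun i => Int_part (beta i * INR N)) k 0).
    + intros i Hi; apply HN1; lia.
    + specialize (HN3 N ltac:(lia)).
      replace (Int_part (1 * INR N)) with (Z.of_nat N) in HN3
        by (apply Int_part_spec; rewrite <- INR_IZR_INZ; lra).
      destruct k as [|k]; [lia|]. simpl. replace (S k - 1)%nat with k in HN3 by lia. exact HN3.
Qed.

Lemma ex_mult_pow_lt C r eps : 0 < r < 1 -> 0 < eps -> exists M, C * r ^ M < eps.
Proof.
  intros Hr Heps; pose proof (Rabs_pos C); pose proof (Rle_abs C).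
  destruct (pow_lt_1_zero r ltac:(rewrite Rabs_pos_eq; lra) (eps / (Rabs C + 1)))
    as [M HM]; [apply Rdiv_lt_0_compat; lra|].
  exists M; specialize (HM M (le_n M)); rewrite Rabs_pos_eq in HM by (apply pow_le; lra).
  apply (Rmult_lt_compat_l (Rabs C + 1)) in HM; [| lra].
  replace ((Rabs C + 1) * (eps / (Rabs C + 1))) with eps in HM by (field; lra).
  pose proof (pow_le r M ltac:(lra)); nra.
Qed.

Theorem proposition4p2 (p : R) (k : nat) (alpha : R) (alphas : nat -> R) :
  1 - p < p -> p < 1 ->
  (1 <= k)%nat ->
  0 < alpha -> alpha < alphas 0%nat ->
  (forall i : nat, (S i < k)%nat -> alphas i < alphas (S i)) ->
  alphas (k - 1)%nat < 1 ->
  exists P : nat -> R,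
    (forall N : nat,
       infinite_sum
         (fun L : nat =>
            walk_mass p N (Int_part (alpha * INR N))
              (map (fun i => Int_part (alphas i * INR N)) (seq 0 k)) L)
         (P N)) /\
    Un_cv P (/ (2 - (p - (1 - p))) ^ k).
Proof.
  intros Hp1 Hp2 Hk Ha Ha0 Hinc Hlast.
  assert (Hp : 0 <= p <= 1) by lra.
  set (x N := Int_part (alpha * INR N)).
  set (ys N := map (fun i => Int_part (alphas i * INR N)) (seq 0 k)).
  exists (fun N => proj1_sig (walk_mass_summable p N Hp (x N) (ys N))).
  split; [intros N; exact (proj2_sig (walk_mass_summable p N Hp (x N) (ys N))) |].
  intros eps Heps.
  destruct (ex_mult_pow_lt ((2 + 4 * INR k) / (p - (1 - p))) (qp_ratio p) eps
              (qp_ratio_range p Hp1 Hp2) Heps) as [M HM].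
  destruct (scaled_sites_gapped k alpha alphas Hk Ha Ha0 Hinc Hlast (S M)) as [N0 HN0].
  exists N0; intros N HN; destruct (HN0 N HN) as [Hx Hys].
  assert (Hlen : length (ys N) = k) by (unfold ys; rewrite length_map, length_seq; reflexivity).
  pose proof (odd_probability_error p N (S M) (x N) (ys N) _ Hp1 Hp2 ltac:(lia) Hx Hys
                (proj2_sig (walk_mass_summable p N Hp (x N) (ys N)))) as Hbound.
  rewrite Hlen, Nat.sub_succ, Nat.sub_0_r in Hbound.
  eapply Rle_lt_trans; [exact Hbound | exact HM].
Qed.
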